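(* Let $G$ be a finite multigraph (no loops), let $\ell \geq 4$ be an integer, let $s$ be a vertex of $G$, and let $A \subsetneq V(G)$ with $s \notin A$ be such that $\lambda_G(x,y) \geq \ell$ for any two distinct $x,y\in A$ and such that no edge of $G$ has both endvertices outside $A$. Let $F_1$ and $F_2$ be independent sets in $L(G,s,\tau_A)$ of sizes $r_1$ and $r_2$ respectively, and suppose there are dangerous sets $D_1$ and $D_2$ such that $F_i = \delta(\{s\}) \cap \delta(D_i)$ for $i=1,2$. Set $\alpha = |F_1 \cap F_2|$. If $\alpha > 0$, $r_1 > \alpha$, $r_2 > \alpha$, and $V(G) \setminus (D_1 \cup D_2 \cup \{s\})$ contains a vertex of $A$, then $r_1 + r_2 \leq \lfloor \deg(s)/2 \rfloor + 2$.
   Context: $\lambda_G(x,y)$ is the maximum number of pairwise edge-disjoint $x$–$y$ paths in $G$; $\delta(X)$ is the set of edges with exactly one endvertex in $X$. Lifting two distinct edges $sx,sy$ means deleting them and adding a new edge $xy$. The target function $\tau_A$ assigns $\ell$ to pairs of vertices both in $A$ and $0$ otherwise; a pair of edges at $s$ is $\tau_A$-admissible if after lifting them the new graph $G'$ satisfies $\lambda_{G'}(x,y)\ge\tau_A(x,y)$ for all distinct $x,y\in V(G)\setminus\{s\}$. The lifting graph $L(G,s,\tau_A)$ has as vertices the edges incident with $s$, two being adjacent iff they form a $\tau_A$-admissible pair. A set $D \subseteq V(G)\setminus\{s\}$ is dangerous if both $D$ and $V(G)\setminus(D\cup\{s\})$ contain vertices of $A$ and $|\delta_G(D)| \leq \ell+1$.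 *)

From mathcomp Require Import all_boot all_order.
Set Implicit Arguments. Unset Strict Implicit. Unset Printing Implicit Defensive.

(* Parallel
   edges are distinct entries with the same endpoints. *)
Definition mgraph (V : finType) := seq (V * V).

Definition edge_at (V : finType) (g : mgraph V) (e : 'I_(size g)) : V * V :=
  tnth (in_tuple g) e.

Definition loopless (V : finType) (g : mgraph V) : Prop :=
  forall e : 'I_(size g), (edge_at e).1 != (edge_at e).2.

Definition joins (V : finType) (g : mgraph V) (k : nat) (u v : V) : bool :=
  (k < size g) &&
  (match nth None (map Some g) k with
   | Some p => ((p.1 == u) && (p.2 == v)) || ((p.1 == v) && (p.2 == u))
   | None => false end).

Definition is_path (V : finType) (g : mgraph V) (x y : V)
    (p : seq V * seq nat) : Prop :=
  let: (vs, es) := p in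
  [/\ size vs = (size es).+1, head x vs = x, last x vs = y, uniq vs &
      forall k, k < size es ->
        joins g (nth 0 es k) (nth x vs k) (nth x vs k.+1)].

(* lambda_G(x,y) >= k : there are k pairwise edge-disjoint x-y paths. *)
Definition lambda_ge (V : finType) (g : mgraph V) (x y : V) (k : nat) : Prop :=
  exists P : seq (seq V * seq nat),
    [/\ size P = k,
        forall i, i < k -> is_path g x y (nth ([::], [::]) P i) &
        forall i j, i < j -> j < k ->
          ~~ has (fun e => e \in (nth ([::], [::]) P j).2)
                 (nth ([::], [::]) P i).2].

Definition delta (V : finType) (g : mgraph V) (X : {set V}) : {set 'I_(size g)} :=
  [set e | ((edge_at e).1 \in X) != ((edge_at e).2 \in X)].

Definition deg (V : finType) (g : mgraph V) (s : V) : nat := #|delta g [set s]|.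

Definition other (V : finType) (s : V) (p : V * V) : V :=
  if p.1 == s then p.2 else p.1.

(* lifting edges e = s x and f = s y: delete them, add x y *)
Definition lift (V : finType) (g : mgraph V) (s : V) (e f : 'I_(size g)) : mgraph V :=
  map (fun k => nth (s, s) g k)
      (filter (fun k : nat => (k != nat_of_ord e) && (k != nat_of_ord f)) (iota 0 (size g)))
    ++ [:: (other s (edge_at e), other s (edge_at f))].

Definition tauA (V : finType) (A : {set V}) (l : nat) (x y : V) : nat :=
  if (x \in A) && (y \in A) then l else 0.

Definition admissible (V : finType) (g : mgraph V) (s : V) (A : {set V}) (l : nat)
    (e f : 'I_(size g)) : Prop :=
  [/\ e != f, e \in delta g [set s], f \in delta g [set s] &
      forall x y : V, x != y -> x != s -> y != s ->
        lambda_ge (lift s e f) x y (tauA A l x y)].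

(* F is an independent set of the lifting graph L(G,s,tau_A) *)
Definition independent_L (V : finType) (g : mgraph V) (s : V) (A : {set V}) (l : nat)
    (F : {set 'I_(size g)}) : Prop :=
  F \subset delta g [set s] /\
  forall e f, e \in F -> f \in F -> e != f -> ~ admissible s A l e f.

Definition dangerous (V : finType) (g : mgraph V) (s : V) (A : {set V}) (l : nat)
    (D : {set V}) : Prop :=
  [/\ s \notin D, D :&: A != set0, ~: (D :|: [set s]) :&: A != set0 &
      #|delta g D| <= l.+1].

From mathcomp Require Import all_boot all_order.
From mathcomp Require Import zify.
Set Implicit Arguments. Unset Strict Implicit. Unset Printing Implicit Defensive.

(* The sets D1 ∩ D2, D1 \ D2, D2 \ D1 and W = V \ (D1 ∪ D2 ∪ {s}) each separate
   two vertices of A: the other ends of edges of F1 ∩ F2, F1 \ F2, F2 \ F1 lie in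
   the first three, and W contains a vertex of A.  Hence each has at least l
   boundary edges.  Counting edge by edge,
     |δ(D1∩D2)| + |δ(D1\D2)| + |δ(D2\D1)| + |δ(W)| + 2|F1| + 2|F2|
       <= 2|δ(D1)| + 2|δ(D2)| + deg(s),
   and since D1, D2 are dangerous this gives 4l + 2(r1 + r2) <= 4(l+1) + deg(s). *)

Section Crossing.

Variable V : finType.

Definition crosses (X : {set V}) (p : V * V) : bool := (p.1 \in X) != (p.2 \in X).

Lemma crosses_count (D1 D2 : {set V}) (s : V) (p : V * V) :
  s \notin D1 -> s \notin D2 ->
  crosses (D1 :&: D2) p + crosses (D1 :\: D2) p + crosses (D2 :\: D1) p
    + crosses (~: (D1 :|: D2 :|: [set s])) p
    + 2 * (crosses [set s] p && crosses D1 p) + 2 * (crosses [set s] p && crosses D2 p)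
  <= 2 * crosses D1 p + 2 * crosses D2 p + crosses [set s] p.
Proof.
case: p => p q sD1 sD2; rewrite /crosses !inE /=.
case: (eqVneq p s) => [->|ps]; case: (eqVneq q s) => [->|qs];
  rewrite ?(negbTE sD1) ?(negbTE sD2) ?eqxx //=;
  by case: (p \in D1); case: (p \in D2); case: (q \in D1); case: (q \in D2).
Qed.

Variable g : mgraph V.

Lemma card_delta (X : {set V}) :
  #|delta g X| = \sum_(e < size g) crosses X (edge_at e).
Proof.
rewrite -sum1_card big_mkcond /=; apply: eq_bigr => e _.
by rewrite inE /crosses; case: (_ != _).
Qed.

Lemma card_deltaI (X Y : {set V}) :
  #|delta g X :&: delta g Y| =
  \sum_(e < size g) (crosses X (edge_at e) && crosses Y (edge_at e)).
Proof.
rewrite -sum1_card big_mkcond /=; apply: eq_bigr => e _.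
by rewrite !inE /crosses; case: (_ && _).
Qed.

Lemma delta_count (D1 D2 : {set V}) (s : V) :
  s \notin D1 -> s \notin D2 ->
  #|delta g (D1 :&: D2)| + #|delta g (D1 :\: D2)| + #|delta g (D2 :\: D1)|
    + #|delta g (~: (D1 :|: D2 :|: [set s]))|
    + 2 * #|delta g [set s] :&: delta g D1| + 2 * #|delta g [set s] :&: delta g D2|
  <= 2 * #|delta g D1| + 2 * #|delta g D2| + deg g s.
Proof.
move=> sD1 sD2; rewrite /deg !card_delta !card_deltaI !big_distrr /= -!big_split /=.
by apply: leq_sum => e _; apply: crosses_count.
Qed.

Lemma delta1_other (s : V) (X : {set V}) (e : 'I_(size g)) :
  e \in delta g [set s] -> s \notin X ->
  (e \in delta g [set s] :&: delta g X) = (other s (edge_at e) \in X).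
Proof.
rewrite /other !inE => es sX; rewrite es /=.
case: (eqVneq (edge_at e).1 s) es => [->|_]; rewrite ?(negbTE sX) /=.
  by case: (_ \in X).
by case: (eqVneq (edge_at e).2 s) => [->|//] _; rewrite (negbTE sX); case: (_ \in X).
Qed.

Lemma delta1_other_in (s : V) (A : {set V}) (e : 'I_(size g)) :
  s \notin A -> ((edge_at e).1 \in A) || ((edge_at e).2 \in A) ->
  e \in delta g [set s] -> other s (edge_at e) \in A.
Proof.
rewrite /other !inE => sA; case: (eqVneq (edge_at e).1 s) => [->|_].
  by rewrite (negbTE sA).
by case: (eqVneq (edge_at e).2 s) => [->|//]; rewrite (negbTE sA) orbF.
Qed.

End Crossing.

Lemma exists_exit_index (f : nat -> bool) (n : nat) :
  f 0 -> ~~ f n -> exists j, [/\ j < n, f j & ~~ f j.+1].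
Proof.
move=> f0; elim: n => [|n IH]; first by rewrite f0.
move=> fn; case fn': (f n); first by exists n.
by have [j [jn fj fj1]] := IH (negbT fn'); exists j; split => //; apply: ltnW.
Qed.

Lemma path_crosses_delta (V : finType) (g : mgraph V) (X : {set V}) (x y : V)
    (p : seq V * seq nat) :
  x \in X -> y \notin X -> is_path g x y p ->
  exists2 e : 'I_(size g), e \in delta g X & nat_of_ord e \in p.2.
Proof.
case: p => vs es /= xX yX [hs hh hl _ hj].
have h0 : nth x vs 0 \in X by case: vs hs hh {hl hj} => //= a vs _ ->.
have h1 : nth x vs (size es) \notin X.
  by rewrite -[size es]/((size es).+1.-1) -hs nth_last hl.
have [j [jn fj fj1]] := @exists_exit_index (fun k => nth x vs k \in X) _ h0 h1.
have /andP [kl hm] := hj j jn.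
exists (Ordinal kl); last by rewrite /= mem_nth.
rewrite inE /edge_at (tnth_nth (x, x)) /=.
move: hm; rewrite (nth_map (x, x)) //.
by case/orP => /andP [/eqP -> /eqP ->]; rewrite ?fj ?(negbTE fj1).
Qed.

(* The easy half of Menger's theorem: k edge-disjoint x-y paths each use a
   distinct edge of any cut separating x from y. *)
Lemma lambda_ge_le_card_delta (V : finType) (g : mgraph V) (X : {set V}) (x y : V)
    (k : nat) :
  x \in X -> y \notin X -> lambda_ge g x y k -> k <= #|delta g X|.
Proof.
move=> xX yX [P [sP hP hD]].
have /fin_all_exists [f hf] : forall i : 'I_k, exists e : 'I_(size g),
    (e \in delta g X) && (nat_of_ord e \in (nth ([::], [::]) P i).2).
  by move=> i; have [e ? ?] := path_crosses_delta xX yX (hP i (ltn_ord i));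
     exists e; apply/andP.
have lt_neq (i j : 'I_k) : i < j -> f i != f j.
  move=> ij; apply: contraNneq (hD i j ij (ltn_ord j)) => fij.
  apply/hasP; exists (nat_of_ord (f i)); first by case/andP: (hf i).
  by rewrite fij; case/andP: (hf j).
have f_inj : injective f.
  move=> i j /eqP; case: (ltngtP i j) => [/lt_neq /negPf -> //|/lt_neq|/val_inj //].
  by rewrite eq_sym => /negPf ->.
rewrite -[k]card_ord -(card_imset _ f_inj); apply: subset_leq_card.
by apply/subsetP => _ /imsetP [i _ ->]; case/andP: (hf i).
Qed.

Lemma separating_card_delta (V : finType) (g : mgraph V) (A X : {set V}) (l : nat)
    (x y : V) :
  (forall x y, x \in A -> y \in A -> x != y -> lambda_ge g x y l) ->
  x \in A -> y \in A -> x \in X -> y \notin X -> l <= #|delta g X|.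
Proof.
move=> lamA xA yA xX yX; apply: (lambda_ge_le_card_delta xX yX).
by apply: lamA => //; apply: contraNneq yX => <-.
Qed.

Lemma corner_cards_delta (V : finType) (g : mgraph V) (A D1 D2 : {set V}) (l : nat)
    (s o12 o1 o2 a : V) :
  (forall x y, x \in A -> y \in A -> x != y -> lambda_ge g x y l) ->
  o12 \in A -> o1 \in A -> o2 \in A -> a \in A ->
  o12 \in D1 :&: D2 -> o1 \in D1 :\: D2 -> o2 \in D2 :\: D1 ->
  a \in ~: (D1 :|: D2 :|: [set s]) ->
  4 * l <= #|delta g (D1 :&: D2)| + #|delta g (D1 :\: D2)| + #|delta g (D2 :\: D1)|
           + #|delta g (~: (D1 :|: D2 :|: [set s]))|.
Proof.
move=> lamA o12A o1A o2A aA o12I o1D o2D aW.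
have [aD1 aD2] : a \notin D1 /\ a \notin D2 by move: aW; rewrite !inE => /norP [/norP []].
have cutI := separating_card_delta lamA o12A aA o12I (ltac:(by rewrite inE (negbTE aD1))).
have cutD12 := separating_card_delta lamA o1A aA o1D (ltac:(by rewrite inE (negbTE aD1) andbF)).
have cutD21 := separating_card_delta lamA o2A aA o2D (ltac:(by rewrite inE (negbTE aD2) andbF)).
have cutW := separating_card_delta lamA aA o12A aW
  (ltac:(by move: o12I; rewrite !inE => /andP [->])).
by rewrite !mulSn mul0n addn0 !addnA !leq_add.
Qed.

Theorem lemma4p3 (V : finType) (g : mgraph V) (l : nat) (s : V) (A : {set V})
    (F1 F2 : {set 'I_(size g)}) (D1 D2 : {set V}) :
  loopless g ->
  4 <= l ->
  A \proper [set: V] ->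
  s \notin A ->
  (forall x y, x \in A -> y \in A -> x != y -> lambda_ge g x y l) ->
  (forall e : 'I_(size g), ((edge_at e).1 \in A) || ((edge_at e).2 \in A)) ->
  independent_L s A l F1 ->
  independent_L s A l F2 ->
  dangerous g s A l D1 ->
  dangerous g s A l D2 ->
  F1 = delta g [set s] :&: delta g D1 ->
  F2 = delta g [set s] :&: delta g D2 ->
  0 < #|F1 :&: F2| ->
  #|F1 :&: F2| < #|F1| ->
  #|F1 :&: F2| < #|F2| ->
  (exists a, [/\ a \in A, a \notin D1, a \notin D2 & a != s]) ->
  #|F1| + #|F2| <= (deg g s)./2 + 2.
Proof.
move=> _ _ _ sA lamA edgeA _ _ [sD1 _ _ cutD1] [sD2 _ _ cutD2] F1E F2E
  r12_gt0 r12_lt1 r12_lt2 [a [aA aD1 aD2 a_s]].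
have other_in e : e \in F1 :|: F2 -> other s (edge_at e) \in A.
  by rewrite F1E F2E -setIUr inE => /andP [es _]; apply: delta1_other_in.
have otherE e (D : {set V}) : e \in F1 :|: F2 -> s \notin D ->
    (e \in delta g [set s] :&: delta g D) = (other s (edge_at e) \in D).
  by rewrite F1E F2E -setIUr inE => /andP [es _]; apply: delta1_other.
have [e12 e12F] : exists e, e \in F1 :&: F2 by apply/set0Pn; rewrite -card_gt0.
have [e1 e1F] : exists e, e \in F1 :\: F2.
  by apply/set0Pn; rewrite -card_gt0 cardsD subn_gt0.
have [e2 e2F] : exists e, e \in F2 :\: F1.
  by apply/set0Pn; rewrite -card_gt0 cardsD setIC subn_gt0.
have e12U : e12 \in F1 :|: F2 by move: e12F; rewrite !inE => /andP [->].
have e1U : e1 \in F1 :|: F2 by move: e1F; rewrite !inE => /andP [_ ->].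
have e2U : e2 \in F1 :|: F2 by move: e2F; rewrite !inE => /andP [_ ->]; rewrite orbT.
move: e12F e1F e2F; rewrite in_setI !in_setD F1E F2E !otherE //.
move=> /andP [o12D1 o12D2] /andP [o1D2 o1D1] /andP [o2D1 o2D2].
have := corner_cards_delta (D1 := D1) (D2 := D2) (s := s) lamA
  (other_in _ e12U) (other_in _ e1U) (other_in _ e2U) aA.
rewrite !inE o12D1 o12D2 o1D1 o2D2 (negbTE o1D2) (negbTE o2D1).
rewrite (negbTE aD1) (negbTE aD2) (negbTE a_s) => /(_ isT isT isT isT) corners.
have := delta_count g sD1 sD2; rewrite -F1E -F2E -divn2.
by move: corners cutD1 cutD2; clear; lia.
Qed.
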